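(* Let $K$ satisfy $0\le K(i,j)=K(j,i)\le\kappa ij$ for some $\kappa>0$, and $\delta_i:=\inf_{j\ge i}K(i,j)>0$ for all $i\ge1$. Let $x_0\in\mathcal X_{1,1}^+$ with $x_{1,0}>0$ and $\|x_0\|_{1,1}=1$, and let $(\ell,x)$, $(t_i)_{i\ge 0}$ and $t_\infty=\lim_i t_i$ be the corresponding solution of the deterministic min-driven coagulation equation. (i) If there is $A_0>0$ such that $K(i,j)\le(\ln(i+1)\wedge\ln(j+1))/(4A_0)$ for all $i,j\ge1$, then $t_\infty=\infty$. (ii) If there are $a_0>0$ and $\alpha>0$ such that $K(i,j)\ge a_0(\ln(i+1)\wedge\ln(j+1))^{1+\alpha}$ for all $i,j\ge1$, then $t_\infty<\infty$.
   Context: Notation: $\|x\|_{1,1}=\sum_i i|x_i|$, $\mathcal X_{1,1}=\{x:\|x\|_{1,1}<\infty\}$, and $\mathcal X_{1,m}=\{x\in\mathcal X_{1,1}:x_i=0\ \text{for } i<m\}$; $+$ denotes nonnegative entries. For $i\ge1$ define $b^{(i)}(x)$ by - $b^{(i)}_j(x)=0$ for $j<i$; - $b^{(i)}_i(x)=-2K(i,i)x_i-\sum_{j>i}K(i,j)x_j$; - $b^{(i)}_j(x)=K(j-i,i)x_{j-i}-K(i,j)x_j$ for $j>i$. The solution of the deterministic min-driven coagulation equation is the unique pair $(\ell,x)$ with the following properties. There is an increasing sequence $0=t_0<t_1<\dots$ with $\ell(t)=i$ on $[t_{i-1},t_i)$, and $t_\infty=\lim_i t_i\in(0,\infty]$.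 Moreover $x\in C([0,t_\infty);\mathcal X_{1,1})$, $x(0)=x_0$, $x(t)\in\mathcal X^+_{1,\ell(t)}\setminus\mathcal X_{1,\ell(t)+1}$ for $t<t_\infty$, and $dx/dt=b^{(\ell(t))}(x(t))$ for $t\notin\{t_i\}$. Thus $\ell(t)$ is the minimal size present at time $t$. *)

From Stdlib Require Import Reals Lra Lia Arith.
Open Scope R_scope.

(* Sequences x = (x_i)_{i>=1} are represented as  x : nat -> R ; the
   coordinate x 0 is irrelevant (it has weight 0 in the norm and never
   enters the equations). *)

Definition norm11_is (x : nat -> R) (L : R) : Prop :=
  infinite_sum (fun n => INR n * Rabs (x n)) L.

Definition in_X11 (x : nat -> R) : Prop := exists L, norm11_is x L.

Definition in_X11_plus (x : nat -> R) : Prop :=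
  in_X11 x /\ forall i, (1 <= i)%nat -> 0 <= x i.

(* x belongs to X^+_{1,m} \ X_{1,m+1}: nonnegative, zero below m, x_m <> 0. *)
Definition in_X1m_plus_strict (m : nat) (x : nat -> R) : Prop :=
  in_X11_plus x /\ (forall i, (1 <= i)%nat -> (i < m)%nat -> x i = 0) /\ x m <> 0.

(* Time s lies in [0, t_infty) where t_infty = lim t_i (t increasing). *)
Definition in_domain (t : nat -> R) (s : R) : Prop :=
  0 <= s /\ exists i, s < t i.

(* The equation dx/dt = b^(ell(t))(x(t)) is read
   componentwise. *)
Definition is_min_driven_solution (K : nat -> nat -> R) (x0 : nat -> R)
    (ell : R -> nat) (t : nat -> R) (x : R -> nat -> R) : Prop :=
  t 0%nat = 0 /\
  (forall i, t i < t (S i)) /\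
  (forall i s, (1 <= i)%nat -> t (i - 1)%nat <= s < t i -> ell s = i) /\
  (forall s, in_domain t s -> in_X11 (x s)) /\
  (forall s, in_domain t s -> forall eps, 0 < eps -> exists delta, 0 < delta /\
     forall u, in_domain t u -> Rabs (u - s) < delta ->
       exists L, norm11_is (fun n => x u n - x s n) L /\ L < eps) /\
  (forall n, x 0 n = x0 n) /\
  (forall s, in_domain t s -> in_X1m_plus_strict (ell s) (x s)) /\
  (forall s, in_domain t s -> (forall i, s <> t i) ->
     let i := ell s in
     forall j, (1 <= j)%nat ->
       ((j < i)%nat -> derivable_pt_lim (fun u => x u j) s 0) /\
       (j = i -> exists S,
          infinite_sum (fun n => if (i <? n)%nat then K i n * x s n else 0) S /\
          derivable_pt_lim (fun u => x u j) s (- 2 * K i i * x s i - S)) /\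
       ((i < j)%nat -> derivable_pt_lim (fun u => x u j) s
          (K (j - i)%nat i * x s (j - i)%nat - K i j * x s j))).

(* Stage i is the time interval [t_(i-1), t_i] on which the minimal size is i
   and x solves x' = b^(i)(x).  The proof only looks at truncated moments
   u |-> sum_(a <= j < b) w_j x_j(u).  These are continuous on every stage and
   differentiable inside it with derivative sum_(a <= j < b) w_j b^(i)_j(x(u)),
   so inequalities for finite sums of b^(i)(y) (proved once, for an arbitrary
   nonnegative y vanishing below i) become monotonicity statements on stages,
   which are then chained across consecutive stages.  In particular the
   truncated mass Q_N = sum_(j <= N) j x_j never exceeds its initial value 1.

   (i)  For the truncated number P_N = sum_(j <= N) x_j, the quantity
        (P_N + 1/N) exp(r_i u), r_i = ln(i+1)/A0, is nondecreasing on stage i,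
        so ln(P_N + 1/N) loses at most r_i (t_i - t_(i-1)) on stage i.  At t_n
        every particle has size > n, hence P_N(t_n) <= 1/(n+1).  If the t_i
        were bounded, the late stages would be too short for this loss.
   (ii) If K >= c on sizes > n, the number W in the window (n, 2n] and
        Y = (number in (2n, N]) - 2 Q_N / N satisfy W' <= -c B, Y' >= c W on
        [t_n, t_2n]; comparing at the midpoint gives t_2n - t_n <= 2/c.
        Summing over the dyadic windows n = 2^k bounds the sequence t. *)

From Stdlib Require Import Reals Lra Lia Arith Classical ClassicalEpsilon.
Open Scope R_scope.

Fixpoint psum (f : nat -> R) (n : nat) : R :=
  match n with O => 0 | S k => psum f k + f k end.

Definition rsum (f : nat -> R) (a b : nat) : R := psum (fun k => f (a + k)%nat) (b - a).

Lemma psum_ext f g n : (forall k, (k < n)%nat -> f k = g k) -> psum f n = psum g n.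
Proof.
  induction n as [|n IH]; intros Hfg; simpl; auto.
  rewrite IH by (intros; apply Hfg; lia); rewrite Hfg by lia; reflexivity.
Qed.

Lemma psum_le f g n : (forall k, (k < n)%nat -> f k <= g k) -> psum f n <= psum g n.
Proof.
  induction n as [|n IH]; intros Hfg; simpl; [lra|].
  assert (f n <= g n) by (apply Hfg; lia).
  assert (psum f n <= psum g n) by (apply IH; intros; apply Hfg; lia).
  lra.
Qed.

Lemma psum_split f n m : psum f (n + m) = psum f n + psum (fun k => f (n + k)%nat) m.
Proof.
  induction m as [|m IH]; simpl; [rewrite Nat.add_0_r; lra|].
  rewrite Nat.add_succ_r; simpl; rewrite IH; lra.
Qed.

Lemma rsum_ext f g a b : (forall k, (a <= k < b)%nat -> f k = g k) -> rsum f a b = rsum g a b.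
Proof. intros Hfg; apply psum_ext; intros; apply Hfg; lia. Qed.

Lemma rsum_le f g a b : (forall k, (a <= k < b)%nat -> f k <= g k) -> rsum f a b <= rsum g a b.
Proof. intros Hfg; apply psum_le; intros; apply Hfg; lia. Qed.

Lemma rsum_const0 a b : rsum (fun _ => 0) a b = 0.
Proof. unfold rsum; induction (b - a)%nat; simpl; lra. Qed.

Lemma rsum_zero f a b : (forall k, (a <= k < b)%nat -> f k = 0) -> rsum f a b = 0.
Proof. intros Hf; rewrite (rsum_ext f (fun _ => 0)) by auto; apply rsum_const0. Qed.

Lemma rsum_nonneg f a b : (forall k, (a <= k < b)%nat -> 0 <= f k) -> 0 <= rsum f a b.
Proof. intros Hf; rewrite <- (rsum_const0 a b); apply rsum_le; auto. Qed.

Lemma rsum_plus f g a b : rsum (fun k => f k + g k) a b = rsum f a b + rsum g a b.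
Proof. unfold rsum; induction (b - a)%nat; simpl; lra. Qed.

Lemma rsum_scal c f a b : rsum (fun k => c * f k) a b = c * rsum f a b.
Proof. unfold rsum; induction (b - a)%nat; simpl; lra. Qed.

Lemma rsum_opp f a b : rsum (fun k => - f k) a b = - rsum f a b.
Proof. unfold rsum; induction (b - a)%nat; simpl; lra. Qed.

Lemma rsum_minus f g a b : rsum (fun k => f k - g k) a b = rsum f a b - rsum g a b.
Proof. unfold Rminus; rewrite rsum_plus, rsum_opp; reflexivity. Qed.

Lemma rsum_abs f a b : Rabs (rsum f a b) <= rsum (fun k => Rabs (f k)) a b.
Proof.
  unfold rsum; induction (b - a)%nat; simpl; [rewrite Rabs_R0; lra|].
  eapply Rle_trans; [apply Rabs_triang|lra].
Qed.

Lemma rsum_empty f a b : (b <= a)%nat -> rsum f a b = 0.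
Proof. intros; unfold rsum; replace (b - a)%nat with 0%nat by lia; reflexivity. Qed.

Lemma rsum_split f a b c : (a <= b <= c)%nat -> rsum f a c = rsum f a b + rsum f b c.
Proof.
  intros Habc; unfold rsum.
  replace (c - a)%nat with ((b - a) + (c - b))%nat by lia.
  rewrite psum_split; f_equal; apply psum_ext; intros; f_equal; lia.
Qed.

Lemma rsum_one f a : rsum f a (a + 1) = f a.
Proof. unfold rsum; replace (a + 1 - a)%nat with 1%nat by lia; simpl; rewrite Nat.add_0_r; lra. Qed.

Lemma rsum_shift f a b m : rsum f (a + m) (b + m) = rsum (fun k => f (k + m)%nat) a b.
Proof.
  unfold rsum; replace (b + m - (a + m))%nat with (b - a)%nat by lia.
  apply psum_ext; intros; f_equal; lia.
Qed.

Lemma sum_f_R0_rsum g M : sum_f_R0 g M = rsum g 0 (M + 1).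
Proof.
  unfold rsum; rewrite Nat.sub_0_r; induction M as [|M IH]; simpl; [lra|].
  rewrite IH; replace (M + 1)%nat with (S M) by lia; simpl; lra.
Qed.

Lemma rsum_le_sum_f_R0 g a b : (forall k, 0 <= g k) -> rsum g a b <= sum_f_R0 g b.
Proof.
  intros Hg; rewrite sum_f_R0_rsum; destruct (le_lt_dec a b).
  - rewrite (rsum_split g 0 a (b + 1)) by lia.
    assert (0 <= rsum g 0 a) by (apply rsum_nonneg; auto).
    rewrite (rsum_split g a b (b + 1)) by lia; rewrite rsum_one.
    specialize (Hg b); lra.
  - rewrite rsum_empty by lia; apply rsum_nonneg; auto.
Qed.

Lemma psum_deriv (g : R -> nat -> R) (d : nat -> R) s n :
  (forall j, (j < n)%nat -> derivable_pt_lim (fun u => g u j) s (d j)) ->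
  derivable_pt_lim (fun u => psum (g u) n) s (psum d n).
Proof.
  induction n as [|n IH]; intros Hd; simpl; [apply derivable_pt_lim_const|].
  apply (derivable_pt_lim_plus (fun u => psum (g u) n) (fun u => g u n)).
  - apply IH; intros; apply Hd; lia.
  - apply Hd; lia.
Qed.

Lemma rsum_deriv (g : R -> nat -> R) (d : nat -> R) s a b :
  (forall j, (a <= j < b)%nat -> derivable_pt_lim (fun u => g u j) s (d j)) ->
  derivable_pt_lim (fun u => rsum (g u) a b) s (rsum d a b).
Proof. intros Hd; apply (psum_deriv (fun u k => g u (a + k)%nat)); intros; apply Hd; lia. Qed.

Lemma rsum_le_moment (m : nat -> R) a b N :
  (1 <= a)%nat -> (forall j, (1 <= j)%nat -> 0 <= m j) -> (b <= N + 1)%nat ->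
  rsum m a b <= / INR a * rsum (fun j => INR j * m j) 1 (N + 1).
Proof.
  intros Ha Hm Hb.
  assert (Hpa : 0 < INR a) by (apply lt_0_INR; lia).
  assert (Hinv : 0 < / INR a) by (apply Rinv_0_lt_compat; auto).
  assert (Hmom : forall c d, (1 <= c)%nat -> 0 <= rsum (fun j => INR j * m j) c d)
    by (intros; apply rsum_nonneg; intros; apply Rmult_le_pos; [apply pos_INR|apply Hm; lia]).
  destruct (le_lt_dec b a).
  - rewrite rsum_empty by lia; apply Rmult_le_pos; [lra|apply Hmom; lia].
  - apply Rle_trans with (/ INR a * rsum (fun j => INR j * m j) a b).
    + rewrite <- rsum_scal; apply rsum_le; intros j Hj.
      assert (INR a <= INR j) by (apply le_INR; lia).
      assert (0 <= m j) by (apply Hm; lia).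
      replace (m j) with (/ INR a * (INR a * m j)) at 1 by (field; lra).
      apply Rmult_le_compat_l; [lra|]; apply Rmult_le_compat_r; auto.
    + apply Rmult_le_compat_l; [lra|].
      rewrite (rsum_split _ 1 a (N + 1)) by lia; rewrite (rsum_split _ a b (N + 1)) by lia.
      assert (0 <= rsum (fun j => INR j * m j) 1 a) by (apply Hmom; lia).
      assert (0 <= rsum (fun j => INR j * m j) b (N + 1)) by (apply Hmom; lia).
      lra.
Qed.

Lemma partial_le_infinite_sum u L M :
  (forall n, 0 <= u n) -> infinite_sum u L -> sum_f_R0 u M <= L.
Proof.
  intros Hu HS; destruct (Rle_dec (sum_f_R0 u M) L) as [|Hn]; auto; exfalso.
  destruct (HS (sum_f_R0 u M - L)) as [N HN]; [lra|].
  specialize (HN (max N M) (Nat.le_max_l _ _)).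
  assert (Hmono : forall k, sum_f_R0 u M <= sum_f_R0 u (M + k)).
  { induction k as [|k IH]; [rewrite Nat.add_0_r; lra|].
    rewrite Nat.add_succ_r; simpl; specialize (Hu (S (M + k))); lra. }
  specialize (Hmono (max N M - M)%nat); replace (M + (max N M - M))%nat with (max N M) in Hmono by lia.
  unfold Rdist in HN; apply Rabs_def2 in HN; lra.
Qed.

Lemma infinite_sum_le_bound u L B :
  infinite_sum u L -> (forall M, sum_f_R0 u M <= B) -> L <= B.
Proof.
  intros HS HB; destruct (Rle_dec L B) as [|Hn]; auto; exfalso.
  destruct (HS (L - B)) as [N HN]; [lra|].
  specialize (HN N (le_n N)); specialize (HB N).
  unfold Rdist in HN; apply Rabs_def2 in HN; lra.
Qed.

Lemma infinite_sum_nonneg u L : (forall n, 0 <= u n) -> infinite_sum u L -> 0 <= L.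
Proof.
  intros Hu HS; eapply Rle_trans; [|apply (partial_le_infinite_sum u L 0); auto].
  simpl; auto.
Qed.

Definition cont_on (f : R -> R) (a b : R) : Prop :=
  forall s, a <= s <= b -> forall eps, 0 < eps -> exists delta, 0 < delta /\
    forall u, a <= u <= b -> Rabs (u - s) < delta -> Rabs (f u - f s) < eps.

Lemma cont_on_sub f a b a' b' : a <= a' -> b' <= b -> cont_on f a b -> cont_on f a' b'.
Proof.
  intros Ha Hb Hf s Hs eps He; destruct (Hf s ltac:(lra) eps He) as [d [Hd Hu]].
  exists d; split; auto; intros u Hu' Hus; apply Hu; auto; lra.
Qed.

Lemma cont_on_const c a b : cont_on (fun _ => c) a b.
Proof.
  intros s Hs eps He; exists 1; split; [lra|]; intros.
  replace (c - c) with 0 by ring; rewrite Rabs_R0; auto.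
Qed.

Lemma cont_on_id a b : cont_on (fun u => u) a b.
Proof. intros s Hs eps He; exists eps; split; auto. Qed.

Lemma cont_on_plus f g a b : cont_on f a b -> cont_on g a b -> cont_on (fun u => f u + g u) a b.
Proof.
  intros Hf Hg s Hs eps He.
  destruct (Hf s Hs (eps / 2) ltac:(lra)) as [d1 [Hd1 H1]].
  destruct (Hg s Hs (eps / 2) ltac:(lra)) as [d2 [Hd2 H2]].
  exists (Rmin d1 d2); split; [apply Rmin_pos; auto|]; intros u Hu Hus.
  assert (A1 := H1 u Hu (Rlt_le_trans _ _ _ Hus (Rmin_l _ _))).
  assert (A2 := H2 u Hu (Rlt_le_trans _ _ _ Hus (Rmin_r _ _))).
  replace (f u + g u - (f s + g s)) with ((f u - f s) + (g u - g s)) by ring.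
  eapply Rle_lt_trans; [apply Rabs_triang|lra].
Qed.

Lemma cont_on_scal c f a b : cont_on f a b -> cont_on (fun u => c * f u) a b.
Proof.
  intros Hf s Hs eps He.
  assert (Hc : 0 <= Rabs c) by apply Rabs_pos.
  destruct (Hf s Hs (eps / (Rabs c + 1))) as [d [Hd H]]; [apply Rdiv_lt_0_compat; lra|].
  exists d; split; auto; intros u Hu Hus; specialize (H u Hu Hus).
  replace (c * f u - c * f s) with (c * (f u - f s)) by ring; rewrite Rabs_mult.
  assert (Rabs c * Rabs (f u - f s) <= Rabs c * (eps / (Rabs c + 1)))
    by (apply Rmult_le_compat_l; lra).
  assert (Rabs c * (eps / (Rabs c + 1)) < eps).
  { apply Rmult_lt_reg_r with (Rabs c + 1); [lra|].
    replace (Rabs c * (eps / (Rabs c + 1)) * (Rabs c + 1)) with (Rabs c * eps) by (field; lra).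
    nra. }
  lra.
Qed.

Lemma cont_on_opp f a b : cont_on f a b -> cont_on (fun u => - f u) a b.
Proof.
  intros Hf s Hs eps He; destruct (cont_on_scal (-1) f a b Hf s Hs eps He) as [d [Hd H]].
  exists d; split; auto; intros u Hu Hus; specialize (H u Hu Hus).
  replace (- f u - - f s) with (-1 * f u - -1 * f s) by ring; auto.
Qed.

Lemma cont_on_mult f g a b : cont_on f a b -> cont_on g a b -> cont_on (fun u => f u * g u) a b.
Proof.
  intros Hf Hg s Hs eps He.
  assert (Hfs : 0 <= Rabs (f s)) by apply Rabs_pos.
  assert (Hgs : 0 <= Rabs (g s)) by apply Rabs_pos.
  set (M := Rabs (f s) + Rabs (g s) + 1).
  assert (HM : 0 < M) by (unfold M; lra).
  set (e := Rmin 1 (eps / (4 * M))).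
  assert (He' : 0 < e) by (apply Rmin_pos; [lra|apply Rdiv_lt_0_compat; unfold M; lra]).
  assert (He1 : e <= 1) by apply Rmin_l.
  assert (He2 : e <= eps / (4 * M)) by apply Rmin_r.
  destruct (Hf s Hs e He') as [d1 [Hd1 H1]]; destruct (Hg s Hs e He') as [d2 [Hd2 H2]].
  exists (Rmin d1 d2); split; [apply Rmin_pos; auto|]; intros u Hu Hus.
  assert (A1 := H1 u Hu (Rlt_le_trans _ _ _ Hus (Rmin_l _ _))).
  assert (A2 := H2 u Hu (Rlt_le_trans _ _ _ Hus (Rmin_r _ _))).
  replace (f u * g u - f s * g s) with ((f u - f s) * g u + f s * (g u - g s)) by ring.
  eapply Rle_lt_trans; [apply Rabs_triang|]; rewrite !Rabs_mult.
  assert (Hgu : Rabs (g u) <= Rabs (g s) + 1).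
  { replace (g u) with (g s + (g u - g s)) by ring.
    eapply Rle_trans; [apply Rabs_triang|lra]. }
  assert (0 <= Rabs (f u - f s)) by apply Rabs_pos.
  assert (Rabs (f u - f s) * Rabs (g u) <= e * M).
  { apply Rle_trans with (e * (Rabs (g s) + 1)).
    - apply Rmult_le_compat; try lra; apply Rabs_pos.
    - apply Rmult_le_compat_l; unfold M; lra. }
  assert (Rabs (f s) * Rabs (g u - g s) <= e * M).
  { apply Rle_trans with (Rabs (f s) * e); [apply Rmult_le_compat_l; lra|].
    rewrite Rmult_comm; apply Rmult_le_compat_l; unfold M; lra. }
  assert (e * M <= eps / 4).
  { apply Rle_trans with (eps / (4 * M) * M); [apply Rmult_le_compat_r; lra|].
    replace (eps / (4 * M) * M) with (eps / 4) by (field; lra); lra. }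
  lra.
Qed.

Lemma lin_deriv k s : derivable_pt_lim (fun u => k * u) s k.
Proof.
  assert (H := derivable_pt_lim_scal id k s 1 (derivable_pt_lim_id s)).
  unfold mult_real_fct, id in H; rewrite Rmult_1_r in H; exact H.
Qed.

Lemma exp_lin_deriv r s : derivable_pt_lim (fun u => exp (r * u)) s (r * exp (r * s)).
Proof.
  replace (r * exp (r * s)) with (exp (r * s) * r) by ring.
  apply (derivable_pt_lim_comp (fun u => r * u) exp); [apply lin_deriv|apply derivable_pt_lim_exp].
Qed.

Lemma cont_on_exp r a b : cont_on (fun u => exp (r * u)) a b.
Proof.
  intros s Hs eps He.
  assert (Hc : continuity_pt (fun u => exp (r * u)) s).
  { apply derivable_continuous_pt; exists (r * exp (r * s)); apply exp_lin_deriv. }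
  destruct (Hc eps He) as [d [Hd H]]; exists d; split; auto; intros u Hu Hus.
  destruct (Req_dec u s) as [->|Hne].
  - replace (exp (r * s) - exp (r * s)) with 0 by ring; rewrite Rabs_R0; auto.
  - apply (H u); split; [split; [exact I|auto]|exact Hus].
Qed.

(* Extension of f beyond [a, b] by constants: it is continuous on R when f
   is continuous on [a, b], which is what the Stdlib mean value theorem needs. *)
Definition clamp a b u := Rmax a (Rmin b u).

Lemma clamp_in a b u : a <= b -> a <= clamp a b u <= b.
Proof. intros; unfold clamp; split; [apply Rmax_l|apply Rmax_lub; [lra|apply Rmin_l]]. Qed.

Lemma clamp_id a b u : a <= u <= b -> clamp a b u = u.
Proof. intros; unfold clamp; rewrite Rmin_right, Rmax_right; lra. Qed.

Lemma clamp_lip a b u c : a <= c <= b -> Rabs (clamp a b u - c) <= Rabs (u - c).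
Proof.
  intros Hc; unfold clamp; destruct (Rle_dec b u).
  - rewrite Rmin_left, Rmax_right by lra; rewrite !Rabs_right by lra; lra.
  - rewrite Rmin_right by lra; destruct (Rle_dec a u).
    + rewrite Rmax_right by lra; lra.
    + rewrite Rmax_left by lra; rewrite !Rabs_left1 by lra; lra.
Qed.

Lemma clamp_cont f a b c :
  a <= b -> cont_on f a b -> a <= c <= b -> continuity_pt (fun u => f (clamp a b u)) c.
Proof.
  intros Hab Hf Hc eps He; destruct (Hf c Hc eps He) as [d [Hd Hu]].
  exists d; split; auto; intros u [_ Hu2]; simpl in *; unfold Rdist in *.
  rewrite (clamp_id a b c Hc); apply Hu; [apply clamp_in; auto|].
  eapply Rle_lt_trans; [apply clamp_lip; auto|auto].
Qed.

Lemma derivable_pt_lim_local f g s l e :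
  0 < e -> (forall u, Rabs (u - s) < e -> f u = g u) ->
  derivable_pt_lim f s l -> derivable_pt_lim g s l.
Proof.
  intros He Hfg Hf eps Heps; destruct (Hf eps Heps) as [d Hd].
  assert (Hm : 0 < Rmin d e) by (apply Rmin_pos; [apply cond_pos|auto]).
  exists (mkposreal _ Hm); intros h Hh Hhd; simpl in Hhd.
  assert (Hde : Rabs h < d /\ Rabs h < e)
    by (split; eapply Rlt_le_trans; [apply Hhd|apply Rmin_l|apply Hhd|apply Rmin_r]).
  rewrite <- !Hfg; [apply Hd; tauto| |].
  - replace (s - s) with 0 by lra; rewrite Rabs_R0; lra.
  - replace (s + h - s) with h by lra; tauto.
Qed.

Lemma nonincreasing_of_deriv f a b :
  a <= b -> cont_on f a b ->
  (forall s, a < s < b -> exists l, derivable_pt_lim f s l /\ l <= 0) -> f b <= f a.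
Proof.
  intros Hab Hf HD; destruct (Req_dec a b) as [->|Hne]; [lra|].
  assert (Hlt : a < b) by lra.
  set (g := fun u => f (clamp a b u)).
  assert (Hg : forall c, a < c < b -> {l | derivable_pt_lim g c l /\ l <= 0}).
  { intros c Hc; destruct (constructive_indefinite_description _ (HD c Hc)) as [l [Hl1 Hl2]].
    exists l; split; auto.
    apply (derivable_pt_lim_local f g c l (Rmin (c - a) (b - c))); [apply Rmin_pos; lra| |auto].
    intros u Hu; unfold g; rewrite clamp_id; auto.
    assert (Rabs (u - c) < c - a) by (eapply Rlt_le_trans; [apply Hu|apply Rmin_l]).
    assert (Rabs (u - c) < b - c) by (eapply Rlt_le_trans; [apply Hu|apply Rmin_r]).
    apply Rabs_def2 in H; apply Rabs_def2 in H0; lra. }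
  set (pr1 := fun c (P : a < c < b) =>
         exist (fun l => derivable_pt_lim g c l) (proj1_sig (Hg c P)) (proj1 (proj2_sig (Hg c P)))).
  set (pr2 := fun c (P : a < c < b) => derivable_pt_id c).
  destruct (MVT g id a b pr1 pr2 Hlt) as [c [P HP]].
  - intros c Hc; apply clamp_cont; auto.
  - intros c _; apply derivable_continuous_pt, derivable_pt_id.
  - unfold derive_pt, pr1, pr2 in HP; simpl in HP.
    assert (Hl := proj2 (proj2_sig (Hg c P))); set (l := proj1_sig (Hg c P)) in *.
    unfold id, g in HP; rewrite !clamp_id in HP by lra.
    assert (E : forall pr : derivable_pt id c, proj1_sig pr = 1)
      by (intro pr; rewrite <- (derive_pt_id c); apply pr_nu).
    rewrite E in HP.
    assert ((b - a) * l <= 0) by nra.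
    lra.
Qed.

Lemma growing_has_ub_of_not_cv_infty u : Un_growing u -> ~ cv_infty u -> has_ub u.
Proof.
  intros Hg Hn; apply not_all_ex_not in Hn; destruct Hn as [M HM].
  exists M; intros y [k ->]; destruct (Rle_dec (u k) M) as [|Hk]; auto; exfalso.
  apply HM; exists k; intros n Hkn; pose proof (growing_prop u n k Hg Hkn); lra.
Qed.

Lemma growing_eventually_flat u eps : Un_growing u -> has_ub u -> 0 < eps ->
  exists m, forall n, (m <= n)%nat -> u n - u m < eps.
Proof.
  intros Hg Hub He; destruct (growing_cv u Hg Hub) as [T HT].
  destruct (HT (eps / 2)) as [m Hm]; [lra|]; exists m; intros n Hn.
  assert (A := Hm n Hn); assert (B := Hm m (le_n m)); unfold Rdist in *.
  apply Rabs_def2 in A; apply Rabs_def2 in B; lra.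
Qed.

Lemma ln_le a b : 0 < a -> a <= b -> ln a <= ln b.
Proof. intros Ha [Hlt| ->]; [left; apply ln_increasing; auto|lra]. Qed.

Lemma ln_nonneg a : 1 <= a -> 0 <= ln a.
Proof. intros Ha; rewrite <- ln_1; apply ln_le; lra. Qed.

Lemma nonpos_of_le_div_all (D A : R) N0 : (forall N, (N0 <= N)%nat -> D <= A / INR N) -> D <= 0.
Proof.
  intros HD; destruct (Rle_dec D 0) as [|Hpos]; auto; exfalso.
  apply Rnot_le_lt in Hpos.
  destruct (INR_unbounded (Rabs A / D + INR N0)) as [N HN].
  assert (HA : 0 <= Rabs A / D) by (apply Rmult_le_pos; [apply Rabs_pos|left; apply Rinv_0_lt_compat; lra]).
  assert (HN0 : (N0 <= N)%nat) by (apply INR_le; lra).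
  assert (HNp : 0 < INR N) by (pose proof (pos_INR N0); lra).
  specialize (HD N HN0).
  assert (D * INR N <= A) by (apply (Rmult_le_compat_r (INR N)) in HD; [|lra];
                              unfold Rdiv in HD; rewrite Rmult_assoc, Rinv_l in HD; lra).
  assert (Rabs A < D * INR N).
  { replace (Rabs A) with (Rabs A / D * D) by (field; lra).
    rewrite (Rmult_comm D); apply Rmult_lt_compat_r; [lra|pose proof (pos_INR N0); lra]. }
  pose proof (Rle_abs A); lra.
Qed.

Lemma rpower_telescope al k : 0 < al -> (1 <= k)%nat ->
  / Rpower (INR (S k)) (1 + al) <= / al * (Rpower (INR k) (- al) - Rpower (INR (S k)) (- al)).
Proof.
  intros Hal Hk; assert (Hk0 : 1 <= INR k) by (apply (le_INR 1); lia).
  rewrite S_INR.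
  destruct (MVT_cor2 (fun u => Rpower u (- al)) (fun u => - al * Rpower u (- al - 1))
              (INR k) (INR k + 1)) as [c [Hc1 Hc2]];
    [lra|intros c Hc; apply derivable_pt_lim_power; lra|].
  replace (- al - 1) with (- (1 + al)) in Hc1 by ring; rewrite (Rpower_Ropp c (1 + al)) in Hc1.
  assert (Hmono : Rpower c (1 + al) <= Rpower (INR k + 1) (1 + al)) by (apply Rle_Rpower_l; lra).
  assert (Hp1 : 0 < Rpower c (1 + al)) by apply exp_pos.
  assert (Hp2 : 0 < Rpower (INR k + 1) (1 + al)) by apply exp_pos.
  assert (/ Rpower (INR k + 1) (1 + al) <= / Rpower c (1 + al)) by (apply Rinv_le_contravar; auto).
  replace (Rpower (INR k) (- al) - Rpower (INR k + 1) (- al)) with (al * / Rpower c (1 + al))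
    by (replace (INR k + 1 - INR k) with 1 in Hc1 by ring; lra).
  replace (/ al * (al * / Rpower c (1 + al))) with (/ Rpower c (1 + al)) by (field; lra).
  auto.
Qed.

(** * Finite sums of the vector field b^(i) *)

(* [coag_series K y i] is the series n |-> K(i,n) y_n restricted to n > i;
   its sum S is the loss term of b^(i)_i. *)
Definition coag_series (K : nat -> nat -> R) (y : nat -> R) (i : nat) : nat -> R :=
  fun n => if (i <? n)%nat then K i n * y n else 0.

(* [rhs K y i S j] = b^(i)_j(y), given S = sum_(n > i) K(i,n) y_n. *)
Definition rhs (K : nat -> nat -> R) (y : nat -> R) (i : nat) (S : R) (j : nat) : R :=
  if (j <? i)%nat then 0
  else if (j =? i)%nat then - 2 * K i i * y i - S
  else K (j - i)%nat i * y (j - i)%nat - K i j * y j.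

Definition admissible (K : nat -> nat -> R) (y : nat -> R) (i : nat) : Prop :=
  (1 <= i)%nat /\ (forall a b, (1 <= a)%nat -> (1 <= b)%nat -> 0 <= K a b /\ K a b = K b a) /\
  (forall j, (1 <= j)%nat -> 0 <= y j) /\ (forall j, (1 <= j)%nat -> (j < i)%nat -> y j = 0).

Lemma rhs_below K y i S j : (j < i)%nat -> rhs K y i S j = 0.
Proof. intros H; unfold rhs; replace (j <? i)%nat with true; auto; symmetry; apply Nat.ltb_lt; auto. Qed.

Lemma rhs_diag K y i S : rhs K y i S i = - 2 * K i i * y i - S.
Proof. unfold rhs; rewrite Nat.ltb_irrefl, Nat.eqb_refl; reflexivity. Qed.

Lemma rhs_above K y i S j : (i < j)%nat -> rhs K y i S j = K (j - i)%nat i * y (j - i)%nat - K i j * y j.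
Proof.
  intros H; unfold rhs.
  replace (j <? i)%nat with false by (symmetry; apply Nat.ltb_ge; lia).
  replace (j =? i)%nat with false by (symmetry; apply Nat.eqb_neq; lia); reflexivity.
Qed.

Lemma rsum_gain_shift K y i a b (w : nat -> R) : (i < a)%nat -> (a <= b)%nat ->
  rsum (fun j => w j * (K (j - i)%nat i * y (j - i)%nat)) a b =
  rsum (fun k => w (k + i)%nat * (K k i * y k)) (a - i) (b - i).
Proof.
  intros Ha Hb.
  replace a with ((a - i) + i)%nat at 1 by lia; replace b with ((b - i) + i)%nat at 1 by lia.
  rewrite rsum_shift; apply rsum_ext; intros k Hk; replace (k + i - i)%nat with k by lia; reflexivity.
Qed.

Section VectorField.

Variables (K : nat -> nat -> R) (y : nat -> R) (i : nat).
Hypothesis Hadm : admissible K y i.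

Lemma coag_series_nonneg n : 0 <= coag_series K y i n.
Proof.
  destruct Hadm as [Hi [HK [Hy _]]]; unfold coag_series.
  destruct (i <? n)%nat eqn:E; [apply Nat.ltb_lt in E|lra].
  apply Rmult_le_pos; [apply HK|apply Hy]; lia.
Qed.

Lemma coag_series_above a b : (i < a)%nat ->
  rsum (coag_series K y i) a b = rsum (fun k => K i k * y k) a b.
Proof.
  intros Ha; apply rsum_ext; intros k Hk; unfold coag_series.
  replace (i <? k)%nat with true; auto; symmetry; apply Nat.ltb_lt; lia.
Qed.

Lemma coag_series_below a : (a <= i + 1)%nat -> rsum (coag_series K y i) 0 a = 0.
Proof.
  intros Ha; apply rsum_zero; intros k Hk; unfold coag_series.
  replace (i <? k)%nat with false; auto; symmetry; apply Nat.ltb_ge; lia.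
Qed.

Lemma coag_partial_le S : infinite_sum (coag_series K y i) S ->
  forall M, rsum (fun k => K i k * y k) (i + 1) M <= S.
Proof.
  intros HS M.
  apply Rle_trans with (sum_f_R0 (coag_series K y i) M);
    [|apply partial_le_infinite_sum; [apply coag_series_nonneg|auto]].
  rewrite sum_f_R0_rsum; destruct (le_lt_dec M (i + 1)).
  - rewrite rsum_empty by lia; apply rsum_nonneg; intros; apply coag_series_nonneg.
  - rewrite (rsum_split _ 0 (i + 1) (M + 1)) by lia.
    rewrite (rsum_split _ (i + 1) M (M + 1)) by lia; rewrite rsum_one, (coag_series_above (i + 1) M) by lia.
    assert (0 <= rsum (coag_series K y i) 0 (i + 1))
      by (apply rsum_nonneg; intros; apply coag_series_nonneg).
    pose proof (coag_series_nonneg M); lra.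
Qed.

Lemma coag_sum_le_bound S B : infinite_sum (coag_series K y i) S ->
  (forall M, rsum (fun k => K i k * y k) (i + 1) M <= B) -> S <= B.
Proof.
  intros HS HB; apply (infinite_sum_le_bound _ _ _ HS); intros M.
  assert (0 <= B) by (specialize (HB 0%nat); rewrite rsum_empty in HB by lia; auto).
  rewrite sum_f_R0_rsum; destruct (le_lt_dec (M + 1) (i + 1)).
  - rewrite coag_series_below by lia; auto.
  - rewrite (rsum_split _ 0 (i + 1) (M + 1)) by lia.
    rewrite coag_series_below, (coag_series_above (i + 1) (M + 1)) by lia; rewrite Rplus_0_l; apply HB.
Qed.

Variable S : R.

(* Lower bound for the derivative of the truncated number sum_(j <= N) y_j:
   gains are dropped. *)
Lemma number_rhs_lower N : (i <= N)%nat ->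
  - 2 * K i i * y i - S - rsum (fun j => K i j * y j) (i + 1) (N + 1)
  <= rsum (fun j => 1 * rhs K y i S j) 1 (N + 1).
Proof.
  destruct Hadm as [Hi [HK [Hy Hz]]]; intros HN.
  rewrite (rsum_split _ 1 i (N + 1)), (rsum_split _ i (i + 1) (N + 1)), rsum_one by lia.
  rewrite (rsum_zero _ 1 i) by (intros; rewrite rhs_below by lia; ring).
  rewrite rhs_diag.
  assert (- rsum (fun j => K i j * y j) (i + 1) (N + 1) <= rsum (fun j => 1 * rhs K y i S j) (i + 1) (N + 1)).
  { rewrite <- rsum_opp; apply rsum_le; intros j Hj; rewrite rhs_above by lia.
    assert (0 <= K (j - i)%nat i * y (j - i)%nat) by (apply Rmult_le_pos; [apply HK|apply Hy]; lia).
    lra. }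
  lra.
Qed.

Hypothesis HS0 : 0 <= S.
Hypothesis HSpart : forall M, rsum (fun k => K i k * y k) (i + 1) M <= S.

(* The truncated mass sum_(j <= N) j y_j decreases at least at the rate of the
   mass leaving [1, N] through coagulation with size i. *)
Lemma mass_rhs_tail N : (2 * i <= N)%nat ->
  rsum (fun j => INR j * rhs K y i S j) 1 (N + 1)
  <= - rsum (fun j => INR j * (K i j * y j)) (N + 1 - i) (N + 1).
Proof.
  destruct Hadm as [Hi [HK [Hy Hz]]]; intros HN.
  rewrite (rsum_split _ 1 i (N + 1)), (rsum_split _ i (i + 1) (N + 1)), rsum_one by lia.
  rewrite (rsum_zero _ 1 i) by (intros; rewrite rhs_below by lia; ring).
  rewrite rhs_diag.
  rewrite (rsum_ext _ (fun j => INR j * (K (j - i)%nat i * y (j - i)%nat) - INR j * (K i j * y j)))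
    by (intros j Hj; rewrite rhs_above by lia; ring).
  rewrite rsum_minus, rsum_gain_shift by lia.
  replace (i + 1 - i)%nat with 1%nat by lia.
  rewrite (rsum_split _ 1 i (N + 1 - i)), (rsum_split _ i (i + 1) (N + 1 - i)), rsum_one by lia.
  rewrite (rsum_zero _ 1 i) by (intros k Hk; rewrite Hz by lia; ring).
  rewrite (rsum_split _ (i + 1) (N + 1 - i) (N + 1)) by lia.
  replace (INR (i + i)) with (2 * INR i) by (rewrite plus_INR; ring).
  (* gain at size k + i minus loss at size k, summed over k in (i, N - i] *)
  assert (E : rsum (fun k => INR (k + i) * (K k i * y k)) (i + 1) (N + 1 - i)
              - rsum (fun j => INR j * (K i j * y j)) (i + 1) (N + 1 - i)
              = INR i * rsum (fun k => K i k * y k) (i + 1) (N + 1 - i)).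
  { rewrite <- rsum_minus, <- rsum_scal; apply rsum_ext; intros k Hk.
    rewrite plus_INR; destruct (HK k i ltac:(lia) ltac:(lia)) as [_ ->]; ring. }
  assert (INR i * rsum (fun k => K i k * y k) (i + 1) (N + 1 - i) <= INR i * S)
    by (apply Rmult_le_compat_l; [apply pos_INR|apply HSpart]).
  lra.
Qed.

Lemma mass_rhs_nonpos N : rsum (fun j => INR j * rhs K y i S j) 1 (N + 1) <= 0.
Proof.
  assert (Hadm' := Hadm); destruct Hadm' as [Hi [HK [Hy Hz]]].
  assert (HKy : forall j, (1 <= j)%nat -> 0 <= K i j * y j)
    by (intros; apply Rmult_le_pos; [apply HK|apply Hy]; lia).
  assert (Hi0 : 0 <= INR i) by apply pos_INR.
  destruct (le_lt_dec (2 * i) N); [|destruct (le_lt_dec i N)].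
  - eapply Rle_trans; [apply mass_rhs_tail; auto|].
    assert (0 <= rsum (fun j => INR j * (K i j * y j)) (N + 1 - i) (N + 1)); [|lra].
    apply rsum_nonneg; intros j Hj; apply Rmult_le_pos; [apply pos_INR|apply HKy; lia].
  - (* i <= N < 2 i: the gains would need a partner of size < i *)
    rewrite (rsum_split _ 1 i (N + 1)), (rsum_split _ i (i + 1) (N + 1)), rsum_one by lia.
    rewrite (rsum_zero _ 1 i) by (intros; rewrite rhs_below by lia; ring).
    rewrite rhs_diag.
    rewrite (rsum_ext _ (fun j => INR j * (K (j - i)%nat i * y (j - i)%nat) - INR j * (K i j * y j)))
      by (intros j Hj; rewrite rhs_above by lia; ring).
    rewrite rsum_minus, rsum_gain_shift by lia.
    rewrite (rsum_zero _ (i + 1 - i) (N + 1 - i)) by (intros k Hk; rewrite Hz by lia; ring).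
    assert (0 <= rsum (fun j => INR j * (K i j * y j)) (i + 1) (N + 1))
      by (apply rsum_nonneg; intros j Hj; apply Rmult_le_pos; [apply pos_INR|apply HKy; lia]).
    assert (0 <= K i i * y i) by (apply HKy; lia).
    nra.
  - rewrite rsum_zero; [lra|]; intros; rewrite rhs_below by lia; ring.
Qed.

(* When the minimal size i lies in the window (n, 2n], the number in the
   window only loses particles. *)
Lemma window_rhs n : (n + 1 <= i <= 2 * n)%nat ->
  rsum (fun j => 1 * rhs K y i S j) (n + 1) (2 * n + 1)
  = - 2 * K i i * y i - S - rsum (fun j => K i j * y j) (i + 1) (2 * n + 1).
Proof.
  destruct Hadm as [Hi [HK [Hy Hz]]]; intros Hn.
  rewrite (rsum_split _ (n + 1) i (2 * n + 1)), (rsum_split _ i (i + 1) (2 * n + 1)), rsum_one by lia.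
  rewrite (rsum_zero _ (n + 1) i) by (intros; rewrite rhs_below by lia; ring).
  rewrite rhs_diag, (rsum_ext _ (fun j => - (K i j * y j))), rsum_opp; [ring|].
  intros j Hj; rewrite rhs_above, (Hz (j - i)%nat) by lia; ring.
Qed.

(* For the same i, the number in (2n, N] gains what coagulation with size i
   brings from [i, 2n] and loses what leaves [1, N]. *)
Lemma beyond_rhs n N : (n + 1 <= i <= 2 * n)%nat -> (4 * n <= N)%nat ->
  rsum (fun j => 1 * rhs K y i S j) (2 * n + 1) (N + 1) =
  rsum (fun k => K i k * y k) i (2 * n + 1) - rsum (fun j => K i j * y j) (N + 1 - i) (N + 1).
Proof.
  destruct Hadm as [Hi [HK [Hy Hz]]]; intros Hn HN.
  rewrite (rsum_ext _ (fun j => 1 * (K (j - i)%nat i * y (j - i)%nat) - K i j * y j))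
    by (intros j Hj; rewrite rhs_above by lia; ring).
  rewrite rsum_minus, rsum_gain_shift by lia.
  rewrite (rsum_split _ (2 * n + 1 - i) i (N + 1 - i)), (rsum_split _ i (2 * n + 1) (N + 1 - i)) by lia.
  rewrite (rsum_zero _ (2 * n + 1 - i) i) by (intros k Hk; rewrite Hz by lia; ring).
  rewrite (rsum_split _ (2 * n + 1) (N + 1 - i) (N + 1)) by lia.
  assert (Hsym : forall a b, (i <= a)%nat ->
            rsum (fun k => 1 * (K k i * y k)) a b = rsum (fun k => K i k * y k) a b).
  { intros a b Ha; apply rsum_ext; intros k Hk.
    destruct (HK k i ltac:(lia) ltac:(lia)) as [_ ->]; ring. }
  rewrite !Hsym by lia; ring.
Qed.

End VectorField.

(** * General properties of a solution *)

Section Solution.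

Variables (K : nat -> nat -> R) (x0 : nat -> R) (ell : R -> nat) (t : nat -> R) (x : R -> nat -> R).
Hypothesis HK : forall i j, (1 <= i)%nat -> (1 <= j)%nat -> 0 <= K i j /\ K i j = K j i.
Hypothesis Hnorm : norm11_is x0 1.
Hypothesis Hsol : is_min_driven_solution K x0 ell t x.

Lemma t_zero : t 0%nat = 0.
Proof. apply Hsol. Qed.

Lemma t_strict k l : (k < l)%nat -> t k < t l.
Proof.
  destruct Hsol as [_ [Hinc _]]; intros Hkl.
  induction Hkl as [|m _ IH]; [apply Hinc|specialize (Hinc m); lra].
Qed.

Lemma t_le k l : (k <= l)%nat -> t k <= t l.
Proof. intros Hkl; destruct (Nat.eq_dec k l) as [->|]; [lra|apply Rlt_le, t_strict; lia]. Qed.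

Lemma t_nonneg k : 0 <= t k.
Proof. rewrite <- t_zero; apply t_le; lia. Qed.

Lemma stage_in_domain i s : t (i - 1)%nat <= s <= t i -> in_domain t s.
Proof.
  intros Hs; split; [pose proof (t_nonneg (i - 1)); lra|].
  exists (S i); pose proof (t_strict i (S i) ltac:(lia)); lra.
Qed.

Lemma t_in_domain k : in_domain t (t k).
Proof. apply (stage_in_domain (S k)); replace (S k - 1)%nat with k by lia; pose proof (t_le k (S k) ltac:(lia)); lra. Qed.

Lemma stage_of_domain s : in_domain t s -> exists i, (1 <= i)%nat /\ t (i - 1)%nat <= s < t i.
Proof.
  intros [Hs [k Hk]]; pose proof t_zero.
  induction k as [|k IH]; [lra|]; destruct (Rlt_dec s (t k)) as [Hl|Hl]; auto.
  exists (S k); split; [lia|]; replace (S k - 1)%nat with k by lia; lra.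
Qed.

Lemma ell_on_stage i s : (1 <= i)%nat -> t (i - 1)%nat <= s < t i -> ell s = i.
Proof. apply Hsol. Qed.

Lemma state_facts s : in_domain t s -> admissible K (x s) (ell s) /\ 0 < x s (ell s).
Proof.
  intros Hd; destruct (stage_of_domain s Hd) as [i [Hi Hs]].
  assert (Hell := ell_on_stage i s Hi Hs).
  destruct Hsol as [_ [_ [_ [_ [_ [_ [Hst _]]]]]]].
  destruct (Hst s Hd) as [[_ Hpos] [Hz Hne]]; rewrite Hell in *.
  assert (0 <= x s i) by (apply Hpos; auto).
  split; [repeat split; auto; apply HK; auto|lra].
Qed.

Lemma moment_nonneg s (w : nat -> R) a b : in_domain t s -> (1 <= a)%nat ->
  (forall j, 0 <= w j) -> 0 <= rsum (fun j => w j * x s j) a b.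
Proof.
  intros Hd Ha Hw; destruct (state_facts s Hd) as [[_ [_ [Hp _]]] _].
  apply rsum_nonneg; intros; apply Rmult_le_pos; [apply Hw|apply Hp; lia].
Qed.

Lemma stage_interior i s : (1 <= i)%nat -> t (i - 1)%nat < s < t i ->
  exists S, admissible K (x s) i /\ 0 < x s i /\ infinite_sum (coag_series K (x s) i) S /\
    forall (w : nat -> R) a b, (1 <= a)%nat ->
      derivable_pt_lim (fun u => rsum (fun j => w j * x u j) a b) s
                       (rsum (fun j => w j * rhs K (x s) i S j) a b).
Proof.
  intros Hi Hs.
  assert (Hd : in_domain t s) by (apply (stage_in_domain i); lra).
  assert (Hell : ell s = i) by (apply ell_on_stage; auto; lra).
  assert (Hnot : forall k, s <> t k).
  { intros k ->; destruct (le_lt_dec k (i - 1)) as [Hk|Hk].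
    - pose proof (t_le k (i - 1) Hk); lra.
    - pose proof (t_le i k ltac:(lia)); lra. }
  destruct (state_facts s Hd) as [Hadm Hpos]; rewrite Hell in Hadm, Hpos.
  destruct Hsol as [_ [_ [_ [_ [_ [_ [_ Hder]]]]]]].
  specialize (Hder s Hd Hnot); simpl in Hder; rewrite Hell in Hder.
  destruct (Hder i Hi) as [_ [HS _]]; destruct (HS eq_refl) as [S [HSsum HSder]].
  exists S; split; [|split; [|split]]; auto.
  intros w a b Ha; apply (rsum_deriv (fun u j => w j * x u j)); intros j Hj.
  apply derivable_pt_lim_scal.
  destruct (Hder j ltac:(lia)) as [Hlow [_ Hhigh]].
  destruct (lt_eq_lt_dec j i) as [[Hlt| ->]|Hgt].
  - rewrite rhs_below by auto; apply Hlow; auto.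
  - rewrite rhs_diag; exact HSder.
  - rewrite rhs_above by auto; apply Hhigh; auto.
Qed.

(* Weighted truncated sums with weights O(j) are continuous on each stage,
   because x is continuous with values in X_{1,1}. *)
Lemma moment_cont_on_stage (w : nat -> R) C a b i : (1 <= a)%nat -> 0 <= C ->
  (forall j, (1 <= j)%nat -> Rabs (w j) <= C * INR j) ->
  cont_on (fun u => rsum (fun j => w j * x u j) a b) (t (i - 1)%nat) (t i).
Proof.
  intros Ha HC Hw s Hs eps He.
  destruct Hsol as [_ [_ [_ [_ [Hcont _]]]]].
  destruct (Hcont s (stage_in_domain i s Hs) (eps / (C + 1))) as [d [Hd Hclose]];
    [apply Rdiv_lt_0_compat; lra|].
  exists d; split; auto; intros u Hu Hus.
  destruct (Hclose u (stage_in_domain i u Hu) Hus) as [L [HL HLe]].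
  assert (Hterm : forall n, 0 <= INR n * Rabs (x u n - x s n))
    by (intros; apply Rmult_le_pos; [apply pos_INR|apply Rabs_pos]).
  assert (HL0 : 0 <= L) by (eapply infinite_sum_nonneg; [apply Hterm|apply HL]).
  rewrite <- rsum_minus; eapply Rle_lt_trans; [apply rsum_abs|].
  apply Rle_lt_trans with (C * L).
  - apply Rle_trans with (rsum (fun j => C * (INR j * Rabs (x u j - x s j))) a b).
    + apply rsum_le; intros j Hj.
      replace (w j * x u j - w j * x s j) with (w j * (x u j - x s j)) by ring.
      rewrite Rabs_mult, <- Rmult_assoc.
      apply Rmult_le_compat_r; [apply Rabs_pos|apply Hw; lia].
    + rewrite rsum_scal; apply Rmult_le_compat_l; auto.
      eapply Rle_trans; [apply rsum_le_sum_f_R0; apply Hterm|].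
      apply partial_le_infinite_sum; auto.
  - apply Rle_lt_trans with (C * (eps / (C + 1))); [apply Rmult_le_compat_l; lra|].
    apply Rmult_lt_reg_r with (C + 1); [lra|].
    replace (C * (eps / (C + 1)) * (C + 1)) with (C * eps) by (field; lra); nra.
Qed.

Lemma unit_weight_le j : (1 <= j)%nat -> Rabs 1 <= 1 * INR j.
Proof. intros Hj; rewrite Rabs_R1; assert (1 <= INR j) by (apply (le_INR 1); lia); lra. Qed.

Lemma index_weight_le j : (1 <= j)%nat -> Rabs (INR j) <= 1 * INR j.
Proof. intros _; rewrite Rabs_right by (apply Rle_ge, pos_INR); lra. Qed.

Lemma nonincreasing_on_stages (g : R -> R) m M L U :
  (forall i, (m < i <= M)%nat -> cont_on g (t (i - 1)%nat) (t i)) ->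
  (forall i s, (m < i <= M)%nat -> t (i - 1)%nat < s < t i -> L < s < U ->
     exists l, derivable_pt_lim g s l /\ l <= 0) ->
  forall p q, t m <= p <= q -> q <= t M -> L <= p -> q <= U -> g q <= g p.
Proof.
  intros Hcont Hder.
  assert (Hstage : forall i p q, (m < i <= M)%nat -> t (i - 1)%nat <= p <= q -> q <= t i ->
                     L <= p -> q <= U -> g q <= g p).
  { intros i p q Hi Hpq Hq HL HU; apply nonincreasing_of_deriv; [lra| |].
    - apply (cont_on_sub g (t (i - 1)%nat) (t i)); auto; lra.
    - intros s Hs; apply (Hder i s Hi); lra. }
  clear Hcont Hder; revert Hstage.
  induction M as [|M IH]; intros Hstage p q Hpq HqM HL HU.
  - assert (p = q) by (pose proof (t_le 0 m ltac:(lia)); lra); subst; lra.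
  - destruct (le_lt_dec m M) as [HmM|HmM].
    + assert (Hstage' : forall i p q, (m < i <= M)%nat -> t (i - 1)%nat <= p <= q -> q <= t i ->
                          L <= p -> q <= U -> g q <= g p) by (intros; apply (Hstage i); auto; lia).
      assert (HS : forall p q, t M <= p <= q -> q <= t (S M) -> L <= p -> q <= U -> g q <= g p)
        by (intros; apply (Hstage (S M)); auto; [lia|replace (S M - 1)%nat with M by lia; auto]).
      destruct (Rle_dec q (t M)); [apply IH; auto|].
      destruct (Rle_dec (t M) p); [apply HS; auto; lra|].
      apply Rle_trans with (g (t M)); [apply HS|apply IH]; auto; lra.
    + assert (p = q) by (pose proof (t_le (S M) m ltac:(lia)); lra); subst; lra.
Qed.

Definition mass (N : nat) (u : R) : R := rsum (fun j => INR j * x u j) 1 (N + 1).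

Lemma mass_initial_le_one N : mass N 0 <= 1.
Proof.
  destruct Hsol as [_ [_ [_ [_ [_ [Hinit _]]]]]].
  assert (Hterm : forall n, 0 <= INR n * Rabs (x0 n))
    by (intros; apply Rmult_le_pos; [apply pos_INR|apply Rabs_pos]).
  unfold mass; rewrite (rsum_ext _ (fun j => INR j * x0 j)) by (intros; rewrite Hinit; auto).
  apply Rle_trans with (rsum (fun j => INR j * Rabs (x0 j)) 1 (N + 1)).
  - apply rsum_le; intros; apply Rmult_le_compat_l; [apply pos_INR|apply Rle_abs].
  - eapply Rle_trans; [apply rsum_le_sum_f_R0, Hterm|apply partial_le_infinite_sum; auto].
Qed.

(* Coagulation only moves mass towards larger sizes, so the truncated mass
   never increases and stays below the total initial mass 1. *)
Lemma mass_le_one N s : in_domain t s -> mass N s <= 1.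
Proof.
  intros [Hs [k Hk]]; eapply Rle_trans; [|apply (mass_initial_le_one N)].
  apply (nonincreasing_on_stages (mass N) 0 k 0 s); try (rewrite ?t_zero; lra).
  - intros i Hi; apply (moment_cont_on_stage INR 1); [lia|lra|apply index_weight_le].
  - intros i u Hi Hu _.
    destruct (stage_interior i u ltac:(lia) Hu) as [S [Hadm [_ [HS Hder]]]].
    eexists; split; [apply Hder; lia|].
    apply mass_rhs_nonpos; auto.
    + eapply infinite_sum_nonneg; [apply coag_series_nonneg|]; eauto.
    + apply coag_partial_le; auto.
Qed.

Lemma tail_number_le s a b : in_domain t s -> (1 <= a)%nat -> rsum (x s) a b <= / INR a.
Proof.
  intros Hd Ha; destruct (state_facts s Hd) as [[_ [_ [Hp _]]] _].
  eapply Rle_trans; [apply (rsum_le_moment _ a b b); auto; lia|].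
  replace (/ INR a) with (/ INR a * 1) at 2 by ring.
  apply Rmult_le_compat_l; [left; apply Rinv_0_lt_compat, lt_0_INR; lia|].
  apply (mass_le_one b s Hd).
Qed.

Lemma number_truncation s a M N : in_domain t s -> (1 <= a)%nat -> (1 <= N)%nat ->
  rsum (x s) a M <= rsum (x s) a (N + 1) + / INR N.
Proof.
  intros Hd Ha HN; destruct (state_facts s Hd) as [[_ [_ [Hp _]]] _].
  assert (Hnn : forall c d, (1 <= c)%nat -> 0 <= rsum (x s) c d)
    by (intros; apply rsum_nonneg; intros; apply Hp; lia).
  assert (Hinv : forall b, (N <= b)%nat -> / INR b <= / INR N)
    by (intros; apply Rinv_le_contravar; [apply lt_0_INR; lia|apply le_INR; lia]).
  destruct (le_lt_dec M (N + 1)); [destruct (le_lt_dec M a)|destruct (le_lt_dec a (N + 1))].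
  - rewrite rsum_empty by lia; pose proof (Hnn a (N + 1)%nat Ha).
    assert (0 < / INR N) by (apply Rinv_0_lt_compat, lt_0_INR; lia); lra.
  - rewrite (rsum_split _ a M (N + 1)) by lia; pose proof (Hnn M (N + 1)%nat ltac:(lia)).
    assert (0 < / INR N) by (apply Rinv_0_lt_compat, lt_0_INR; lia); lra.
  - rewrite (rsum_split _ a (N + 1) M) by lia.
    pose proof (tail_number_le s (N + 1) M Hd ltac:(lia)); pose proof (Hinv (N + 1)%nat ltac:(lia)); lra.
  - pose proof (tail_number_le s a M Hd Ha); pose proof (Hinv a ltac:(lia)); pose proof (Hnn a (N + 1)%nat Ha); lra.
Qed.

(** * (i) Slowly growing kernels: the switching times are unbounded *)

Section NoGelation.

Variable A0 : R.
Hypothesis HA0 : 0 < A0.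
Hypothesis HKup : forall i j, (1 <= i)%nat -> (1 <= j)%nat ->
  K i j <= Rmin (ln (INR i + 1)) (ln (INR j + 1)) / (4 * A0).

Definition number (N : nat) (u : R) : R := rsum (fun j => 1 * x u j) 1 (N + 1).

Lemma kernel_row_le i j : (1 <= i)%nat -> (1 <= j)%nat -> K i j <= ln (INR i + 1) / (4 * A0).
Proof.
  intros Hi Hj; eapply Rle_trans; [apply HKup; auto|].
  unfold Rdiv; apply Rmult_le_compat_r; [left; apply Rinv_0_lt_compat; lra|apply Rmin_l].
Qed.

Lemma number_split N i s : admissible K (x s) i -> (i <= N)%nat ->
  number N s = x s i + rsum (x s) (i + 1) (N + 1).
Proof.
  intros [Hi [_ [_ Hz]]] HN.
  unfold number; rewrite (rsum_split _ 1 i (N + 1)), (rsum_split _ i (i + 1) (N + 1)), rsum_one by lia.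
  rewrite rsum_zero by (intros j Hj; rewrite Hz by lia; ring).
  rewrite (rsum_ext (fun j => 1 * x s j) (x s)) by (intros; ring); ring.
Qed.

Lemma number_deriv_lower N i s : (1 <= i)%nat -> (i <= N)%nat -> t (i - 1)%nat < s < t i ->
  exists d, derivable_pt_lim (number N) s d /\
            - (ln (INR i + 1) / A0) * (number N s + / INR N) <= d.
Proof.
  intros Hi HN Hs.
  destruct (stage_interior i s Hi Hs) as [S [Hadm [_ [HS Hder]]]].
  assert (Hd : in_domain t s) by (apply (stage_in_domain i); lra).
  assert (Hy := proj1 (proj2 (proj2 Hadm))).
  set (c := ln (INR i + 1) / (4 * A0)).
  assert (Hc0 : 0 <= c).
  { unfold c, Rdiv; apply Rmult_le_pos; [apply ln_nonneg; pose proof (pos_INR i); lra|].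
    left; apply Rinv_0_lt_compat; lra. }
  assert (HKc : forall j, (1 <= j)%nat -> K i j <= c) by (intros; apply kernel_row_le; auto).
  assert (HP := number_split N i s Hadm HN).
  assert (Hyi : 0 <= x s i) by (apply Hy; lia).
  assert (HT : 0 <= rsum (x s) (i + 1) (N + 1)) by (apply rsum_nonneg; intros; apply Hy; lia).
  assert (HN0 : 0 < / INR N) by (apply Rinv_0_lt_compat, lt_0_INR; lia).
  assert (Hrow : forall a b, (1 <= a)%nat ->
            rsum (fun k => K i k * x s k) a b <= c * rsum (x s) a b).
  { intros a b Ha; rewrite <- rsum_scal; apply rsum_le; intros k Hk.
    apply Rmult_le_compat_r; [apply Hy|apply HKc]; lia. }
  (* the loss term S is controlled by the number itself *)
  assert (HSb : S <= c * (number N s + / INR N)).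
  { apply (coag_sum_le_bound K (x s) i S); auto; intros M.
    eapply Rle_trans; [apply Hrow; lia|]; apply Rmult_le_compat_l; auto.
    rewrite HP; pose proof (number_truncation s (i + 1) M N Hd ltac:(lia) ltac:(lia)); lra. }
  exists (rsum (fun j => 1 * rhs K (x s) i S j) 1 (N + 1)); split; [apply Hder; lia|].
  eapply Rle_trans; [|apply number_rhs_lower; auto].
  assert (K i i * x s i <= c * x s i) by (apply Rmult_le_compat_r; auto; apply HKc; lia).
  assert (rsum (fun j => K i j * x s j) (i + 1) (N + 1) <= c * rsum (x s) (i + 1) (N + 1))
    by (apply Hrow; lia).
  replace (ln (INR i + 1) / A0) with (4 * c) by (unfold c; field; lra).
  rewrite HP in *.
  assert (0 <= c * x s i) by (apply Rmult_le_pos; auto).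
  assert (0 <= c * rsum (x s) (i + 1) (N + 1)) by (apply Rmult_le_pos; auto).
  assert (0 <= c * / INR N) by (apply Rmult_le_pos; lra).
  nra.
Qed.

Lemma number_growth_on_stage N i : (1 <= i)%nat -> (i <= N)%nat ->
  (number N (t (i - 1)%nat) + / INR N) * exp (ln (INR i + 1) / A0 * t (i - 1)%nat)
  <= (number N (t i) + / INR N) * exp (ln (INR i + 1) / A0 * t i).
Proof.
  intros Hi HN; set (r := ln (INR i + 1) / A0).
  set (g := fun u => - ((number N u + / INR N) * exp (r * u))).
  assert (g (t i) <= g (t (i - 1)%nat)); [|unfold g in *; lra].
  apply nonincreasing_of_deriv; [apply t_le; lia| |].
  - apply cont_on_opp, cont_on_mult; [apply cont_on_plus; [|apply cont_on_const]|apply cont_on_exp].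
    apply (moment_cont_on_stage _ 1); [lia|lra|apply unit_weight_le].
  - intros s Hs; destruct (number_deriv_lower N i s Hi HN Hs) as [d [Hd Hdl]].
    exists (- (d * exp (r * s) + (number N s + / INR N) * (r * exp (r * s)))); split.
    + apply derivable_pt_lim_opp with (f := fun u => (number N u + / INR N) * exp (r * u)).
      apply derivable_pt_lim_mult with (f1 := fun u => number N u + / INR N) (f2 := fun u => exp (r * u));
        [|apply exp_lin_deriv].
      replace d with (d + 0) by ring.
      apply derivable_pt_lim_plus with (f1 := number N) (f2 := fun _ => / INR N);
        [auto|apply derivable_pt_lim_const].
    + assert (0 < exp (r * s)) by apply exp_pos; fold r in Hdl.
      assert (0 <= (d + r * (number N s + / INR N)) * exp (r * s)) by (apply Rmult_le_pos; lra).
      nra.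
Qed.

Lemma number_plus_inv_pos N k : (1 <= N)%nat -> 0 < number N (t k) + / INR N.
Proof.
  intros HN; assert (0 < / INR N) by (apply Rinv_0_lt_compat, lt_0_INR; lia).
  assert (0 <= number N (t k)) by (apply moment_nonneg; [apply t_in_domain|lia|intros; lra]).
  lra.
Qed.

Lemma number_log_decay N p q rho : (p <= q)%nat -> (q <= N)%nat -> ln (INR q + 1) / A0 <= rho ->
  ln (number N (t p) + / INR N) - rho * (t q - t p) <= ln (number N (t q) + / INR N).
Proof.
  intros Hpq HqN Hrho; induction q as [|q IH].
  - replace p with 0%nat by lia; lra.
  - destruct (Nat.eq_dec p (S q)) as [->|Hne]; [lra|].
    assert (Hrate : ln (INR (S q) + 1) / A0 <= rho) by exact Hrho.
    assert (Hmono : ln (INR q + 1) / A0 <= ln (INR (S q) + 1) / A0).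
    { unfold Rdiv; apply Rmult_le_compat_r; [left; apply Rinv_0_lt_compat; lra|].
      rewrite S_INR; apply ln_le; pose proof (pos_INR q); lra. }
    specialize (IH ltac:(lia) ltac:(lia) ltac:(lra)).
    assert (Hstep := number_growth_on_stage N (S q) ltac:(lia) HqN).
    replace (S q - 1)%nat with q in Hstep by lia.
    set (r := ln (INR (S q) + 1) / A0) in *.
    assert (Hq := number_plus_inv_pos N q ltac:(lia)).
    assert (HSq := number_plus_inv_pos N (S q) ltac:(lia)).
    apply ln_le in Hstep; [|apply Rmult_lt_0_compat; [auto|apply exp_pos]].
    rewrite !ln_mult, !ln_exp in Hstep by (auto; apply exp_pos).
    assert (Htt : t q <= t (S q)) by (apply t_le; lia).
    assert (r * (t (S q) - t q) <= rho * (t (S q) - t q)) by (apply Rmult_le_compat_r; lra).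
    lra.
Qed.

(* Initially there is at least x0_1 > 0 particle (of size 1) ... *)
Lemma number_initial_lower N : (1 <= N)%nat -> x0 1%nat <= number N 0.
Proof.
  intros HN; destruct Hsol as [_ [_ [_ [_ [_ [Hinit _]]]]]].
  unfold number; rewrite (rsum_split _ 1 2 (N + 1)) by lia.
  replace 2%nat with (1 + 1)%nat by lia; rewrite rsum_one, Hinit.
  assert (Hd0 : in_domain t 0) by (rewrite <- t_zero; apply t_in_domain).
  assert (0 <= rsum (fun j => 1 * x 0 j) (1 + 1) (N + 1)) by (apply moment_nonneg; auto; intros; lra).
  lra.
Qed.

(* ... while at time t_n every particle has size > n, so there are at most
   1/(n+1) of them. *)
Lemma number_at_switch n : number (S n) (t n) <= / INR (S n).
Proof.
  assert (Hd := t_in_domain n).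
  assert (Hell : ell (t n) = S n).
  { apply ell_on_stage; [lia|]; replace (S n - 1)%nat with n by lia.
    pose proof (t_strict n (S n) ltac:(lia)); lra. }
  destruct (state_facts (t n) Hd) as [[_ [_ [_ Hz]]] _]; rewrite Hell in Hz.
  unfold number; rewrite (rsum_split _ 1 (S n) (S n + 1)) by lia.
  rewrite (rsum_zero _ 1 (S n)) by (intros; rewrite Hz by lia; ring).
  rewrite (rsum_ext _ (x (t n))) by (intros; ring).
  pose proof (tail_number_le (t n) (S n) (S n + 1) Hd ltac:(lia)); lra.
Qed.

(* If the t_i were bounded, the stages after some m would have total length
   < A0/2, so the number could lose at most ln(n+1)/2 there, whereas it has to
   drop from about x0_1 to 1/(n+1) by time t_n. *)
Lemma switching_times_unbounded : 0 < x0 1%nat -> cv_infty t.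
Proof.
  intros Hx01; apply NNPP; intros Hbounded.
  assert (Hgrow : Un_growing t) by (intros k; apply t_le; lia).
  destruct (growing_eventually_flat t (A0 / 2) Hgrow
              (growing_has_ub_of_not_cv_infty t Hgrow Hbounded) ltac:(lra)) as [m Hm].
  set (C := ln 2 - ln (x0 1%nat) + ln (INR m + 1) / A0 * t m).
  destruct (INR_unbounded (exp (2 * C) + INR m)) as [n Hn].
  assert (Hmn : (m <= n)%nat) by (apply INR_le; pose proof (exp_pos (2 * C)); lra).
  set (N := S n); set (g := fun k => ln (number N (t k) + / INR N)).
  assert (HN : INR N = INR n + 1) by (unfold N; apply S_INR).
  assert (Hn0 : 0 < INR n + 1) by (pose proof (pos_INR n); lra).
  assert (Hdecay1 : g 0%nat - ln (INR m + 1) / A0 * (t m - t 0%nat) <= g m)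
    by (apply number_log_decay; unfold N; [lia|lia|lra]).
  assert (Hdecay2 : g m - ln (INR n + 1) / A0 * (t n - t m) <= g n)
    by (apply number_log_decay; unfold N; [lia|lia|lra]).
  assert (Hstart : ln (x0 1%nat) <= g 0%nat).
  { unfold g; rewrite t_zero; apply ln_le; auto.
    pose proof (number_initial_lower N ltac:(unfold N; lia)).
    assert (0 < / INR N) by (apply Rinv_0_lt_compat; lra); lra. }
  assert (Hend : g n <= ln 2 - ln (INR n + 1)).
  { unfold g; pose proof (number_plus_inv_pos N n ltac:(unfold N; lia)) as Hpos.
    pose proof (number_at_switch n) as Hsw; fold N in Hsw; rewrite HN in Hsw, Hpos |- *.
    replace (ln 2 - ln (INR n + 1)) with (ln (2 * / (INR n + 1)))
      by (rewrite ln_mult, ln_Rinv by (try apply Rinv_0_lt_compat; lra); ring).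
    apply ln_le; lra. }
  assert (Hlate : ln (INR n + 1) / A0 * (t n - t m) <= ln (INR n + 1) / 2).
  { assert (0 <= ln (INR n + 1)) by (apply ln_nonneg; pose proof (pos_INR n); lra).
    specialize (Hm n Hmn); pose proof (t_le m n Hmn).
    replace (ln (INR n + 1) / 2) with (ln (INR n + 1) / A0 * (A0 / 2)) by (field; lra).
    apply Rmult_le_compat_l; [apply Rmult_le_pos; [lra|left; apply Rinv_0_lt_compat; lra]|lra]. }
  assert (Hbig : 2 * C < ln (INR n + 1)).
  { rewrite <- (ln_exp (2 * C)); apply ln_increasing; [apply exp_pos|pose proof (pos_INR m); lra]. }
  rewrite t_zero in Hdecay1; unfold C in Hbig; lra.
Qed.

End NoGelation.

(** * (ii) Fast growing kernels: the switching times converge *)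

Section Window.

Variables (n : nat) (c : R).
Hypothesis Hn : (1 <= n)%nat.
Hypothesis Hc : 0 < c.
Hypothesis HKc : forall a b, (n + 1 <= a)%nat -> (n + 1 <= b)%nat -> c <= K a b.

Definition window_number (u : R) : R := rsum (fun j => 1 * x u j) (n + 1) (2 * n + 1).
Definition beyond_number (N : nat) (u : R) : R := rsum (fun j => 1 * x u j) (2 * n + 1) (N + 1).

(* The correction -(2/N) mass compensates for the particles leaving [1, N],
   which makes [balance N] nondecreasing on the window stages. *)
Definition balance (N : nat) (u : R) : R := beyond_number N u + (- 2 / INR N) * mass N u.

(* While the minimal size lies in the window, every coagulation event with a
   particle beyond 2n removes a particle from the window: W' <= - c B. *)
Lemma window_number_deriv N i s : (2 * n <= N)%nat -> (n < i <= 2 * n)%nat -> t (i - 1)%nat < s < t i ->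
  exists d, derivable_pt_lim window_number s d /\ d <= - c * beyond_number N s.
Proof.
  intros HN Hi Hs.
  destruct (stage_interior i s ltac:(lia) Hs) as [S [Hadm [_ [HS Hder]]]].
  assert (Hadm' := Hadm); destruct Hadm' as [_ [HKnn [Hy _]]].
  assert (Hpart := coag_partial_le K (x s) i Hadm S HS (N + 1)).
  rewrite (rsum_split _ (i + 1) (2 * n + 1) (N + 1)) in Hpart by lia.
  exists (rsum (fun j => 1 * rhs K (x s) i S j) (n + 1) (2 * n + 1)); split; [apply Hder; lia|].
  rewrite window_rhs by (auto; lia).
  assert (c * beyond_number N s <= rsum (fun k => K i k * x s k) (2 * n + 1) (N + 1)).
  { unfold beyond_number; rewrite <- rsum_scal; apply rsum_le; intros k Hk; rewrite Rmult_1_l.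
    apply Rmult_le_compat_r; [apply Hy; lia|apply HKc; lia]. }
  assert (0 <= rsum (fun j => K i j * x s j) (i + 1) (2 * n + 1))
    by (apply rsum_nonneg; intros; apply Rmult_le_pos; [apply HKnn|apply Hy]; lia).
  assert (0 <= K i i * x s i) by (apply Rmult_le_pos; [apply HKnn|apply Hy]; lia).
  lra.
Qed.

(* Conversely coagulations with the window particles feed (2n, N], and the
   particles leaving [1, N] are paid for by the mass correction: Y' >= c W. *)
Lemma balance_deriv N i s : (4 * n <= N)%nat -> (n < i <= 2 * n)%nat -> t (i - 1)%nat < s < t i ->
  exists d, derivable_pt_lim (balance N) s d /\ c * window_number s <= d.
Proof.
  intros HN Hi Hs.
  destruct (stage_interior i s ltac:(lia) Hs) as [S [Hadm [_ [HS Hder]]]].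
  assert (Hadm' := Hadm); destruct Hadm' as [_ [HKnn [Hy Hz]]].
  assert (HS0 : 0 <= S) by exact (infinite_sum_nonneg _ _ (coag_series_nonneg K (x s) i Hadm) HS).
  assert (HNp : 0 < INR N) by (apply lt_0_INR; lia).
  set (dQ := rsum (fun j => INR j * rhs K (x s) i S j) 1 (N + 1)).
  exists (rsum (fun j => 1 * rhs K (x s) i S j) (2 * n + 1) (N + 1) + (- 2 / INR N) * dQ); split.
  { apply derivable_pt_lim_plus with (f1 := beyond_number N) (f2 := fun u => - 2 / INR N * mass N u);
      [apply Hder; lia|].
    apply derivable_pt_lim_scal with (f := mass N); apply Hder; lia. }
  rewrite beyond_rhs with (n := n) by (auto; lia).
  assert (HQ : dQ <= - rsum (fun j => INR j * (K i j * x s j)) (N + 1 - i) (N + 1))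
    by (apply mass_rhs_tail; auto; [apply coag_partial_le; auto|lia]).
  set (E := rsum (fun j => K i j * x s j) (N + 1 - i) (N + 1)).
  set (T := rsum (fun j => INR j * (K i j * x s j)) (N + 1 - i) (N + 1)) in HQ.
  (* the particles leaving [1, N] have size at least N/2 *)
  assert (HTE : INR N / 2 * E <= T).
  { unfold E, T; rewrite <- rsum_scal; apply rsum_le; intros j Hj.
    apply Rmult_le_compat_r; [apply Rmult_le_pos; [apply HKnn|apply Hy]; lia|].
    assert (INR N <= INR (2 * j)) by (apply le_INR; lia).
    rewrite mult_INR in H; simpl in H; lra. }
  assert (HW : c * window_number s <= rsum (fun k => K i k * x s k) i (2 * n + 1)).
  { unfold window_number; rewrite (rsum_split _ (n + 1) i (2 * n + 1)) by lia.
    rewrite (rsum_zero _ (n + 1) i) by (intros k Hk; rewrite Hz by lia; ring).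
    rewrite Rplus_0_l, <- rsum_scal; apply rsum_le; intros k Hk; rewrite Rmult_1_l.
    apply Rmult_le_compat_r; [apply Hy; lia|apply HKc; lia]. }
  assert (Hpos : 0 < 2 / INR N) by (apply Rdiv_lt_0_compat; lra).
  assert (E <= 2 / INR N * T).
  { replace E with (2 / INR N * (INR N / 2 * E)) at 1 by (field; lra).
    apply Rmult_le_compat_l; lra. }
  assert (2 / INR N * T <= - 2 / INR N * dQ).
  { replace (- 2 / INR N * dQ) with (2 / INR N * (- dQ)) by (field; lra).
    apply Rmult_le_compat_l; lra. }
  lra.
Qed.

Lemma window_number_cont i : cont_on window_number (t (i - 1)%nat) (t i).
Proof. apply (moment_cont_on_stage _ 1); [lia|lra|apply unit_weight_le]. Qed.

Lemma balance_cont N i : cont_on (balance N) (t (i - 1)%nat) (t i).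
Proof.
  apply cont_on_plus; [|apply cont_on_scal];
    [apply (moment_cont_on_stage _ 1); [lia|lra|apply unit_weight_le]|].
  apply (moment_cont_on_stage INR 1); [lia|lra|apply index_weight_le].
Qed.

Lemma window_in_domain s : t n <= s <= t (2 * n)%nat -> in_domain t s.
Proof.
  intros Hs; split; [pose proof (t_nonneg n); lra|].
  exists (S (2 * n)); pose proof (t_strict (2 * n) (S (2 * n)) ltac:(lia)); lra.
Qed.

Lemma window_number_nonincreasing p q :
  t n <= p <= q -> q <= t (2 * n)%nat -> window_number q <= window_number p.
Proof.
  intros Hpq Hq; apply (nonincreasing_on_stages window_number n (2 * n) p q); try lra.
  - intros i _; apply window_number_cont.
  - intros i s Hi Hs _.
    destruct (window_number_deriv (2 * n) i s ltac:(lia) Hi Hs) as [d [Hd Hdb]].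
    exists d; split; auto.
    assert (0 <= beyond_number (2 * n) s)
      by (apply moment_nonneg; [apply (stage_in_domain i); lra|lia|intros; lra]).
    nra.
Qed.

Lemma balance_nondecreasing N p q : (4 * n <= N)%nat ->
  t n <= p <= q -> q <= t (2 * n)%nat -> balance N p <= balance N q.
Proof.
  intros HN Hpq Hq.
  assert (- balance N q <= - balance N p); [|lra].
  apply (nonincreasing_on_stages (fun u => - balance N u) n (2 * n) p q); try lra.
  - intros i _; apply cont_on_opp, balance_cont.
  - intros i s Hi Hs _.
    destruct (balance_deriv N i s HN Hi Hs) as [d [Hd Hdb]].
    exists (- d); split; [apply derivable_pt_lim_opp with (f := balance N); auto|].
    assert (0 <= window_number s)
      by (apply moment_nonneg; [apply (stage_in_domain i); lra|lia|intros; lra]).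
    nra.
Qed.

Lemma balance_le_beyond N s : in_domain t s -> balance N s <= beyond_number N s.
Proof.
  intros Hd; unfold balance.
  assert (0 <= mass N s) by (apply moment_nonneg; auto; intros; apply pos_INR).
  destruct N as [|N]; [simpl; unfold Rdiv; rewrite Rinv_0; lra|].
  assert (0 < 2 / INR (S N)) by (apply Rdiv_lt_0_compat; [lra|apply lt_0_INR; lia]).
  replace (- 2 / INR (S N)) with (- (2 / INR (S N))) by (unfold Rdiv; ring); nra.
Qed.

Lemma balance_lower N s : (1 <= N)%nat -> in_domain t s -> - (2 / INR N) <= balance N s.
Proof.
  intros HN Hd; unfold balance.
  assert (0 <= beyond_number N s) by (apply moment_nonneg; auto; [lia|intros; lra]).
  assert (0 <= mass N s) by (apply moment_nonneg; auto; intros; apply pos_INR).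
  assert (mass N s <= 1) by (apply mass_le_one; auto).
  assert (0 < 2 / INR N) by (apply Rdiv_lt_0_compat; [lra|apply lt_0_INR; lia]).
  replace (- 2 / INR N) with (- (2 / INR N)) by (unfold Rdiv; ring); nra.
Qed.

(* Integrated form of Y' >= c W, using that W decreases: on [p, q],
   Y gains at least c W(q) (q - p). *)
Lemma balance_gain N p q : (4 * n <= N)%nat -> t n <= p <= q -> q <= t (2 * n)%nat ->
  balance N p + c * window_number q * (q - p) <= balance N q.
Proof.
  intros HN Hpq Hq.
  assert (- balance N q + c * window_number q * q <= - balance N p + c * window_number q * p); [|lra].
  apply (nonincreasing_on_stages (fun u => - balance N u + c * window_number q * u) n (2 * n) p q);
    try lra.
  - intros i _; apply cont_on_plus; [apply cont_on_opp, balance_cont|apply cont_on_scal, cont_on_id].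
  - intros i s Hi Hs Hps.
    destruct (balance_deriv N i s HN Hi Hs) as [d [Hd Hdb]].
    exists (- d + c * window_number q); split.
    + apply derivable_pt_lim_plus with (f1 := fun u => - balance N u) (f2 := fun u => c * window_number q * u);
        [apply derivable_pt_lim_opp with (f := balance N); auto|apply lin_deriv].
    + assert (window_number q <= window_number s) by (apply window_number_nonincreasing; lra).
      nra.
Qed.

(* Integrated form of W' <= - c B, using B >= Y and that Y increases: on
   [p, q], W loses at least c Y(p) (q - p). *)
Lemma window_loss N p q : (4 * n <= N)%nat -> t n <= p <= q -> q <= t (2 * n)%nat ->
  window_number q <= window_number p - c * balance N p * (q - p).
Proof.
  intros HN Hpq Hq.
  assert (window_number q + c * balance N p * q <= window_number p + c * balance N p * p); [|lra].
  apply (nonincreasing_on_stages (fun u => window_number u + c * balance N p * u) n (2 * n) p q);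
    try lra.
  - intros i _; apply cont_on_plus; [apply window_number_cont|apply cont_on_scal, cont_on_id].
  - intros i s Hi Hs Hps.
    destruct (window_number_deriv N i s ltac:(lia) Hi Hs) as [d [Hd Hdb]].
    exists (d + c * balance N p); split.
    + apply derivable_pt_lim_plus with (f1 := window_number) (f2 := fun u => c * balance N p * u);
        [auto|apply lin_deriv].
    + assert (balance N p <= balance N s) by (apply balance_nondecreasing; auto; lra).
      assert (balance N s <= beyond_number N s) by (apply balance_le_beyond, window_in_domain; lra).
      nra.
Qed.

(* Before t_2n the minimal size lies in the window, so the window is not empty. *)
Lemma window_number_pos s : t n <= s < t (2 * n)%nat -> 0 < window_number s.
Proof.
  intros Hs; assert (Hd : in_domain t s) by (apply window_in_domain; lra).
  destruct (stage_of_domain s Hd) as [i [Hi His]].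
  assert (Hin : (n + 1 <= i <= 2 * n)%nat).
  { split; [destruct (le_lt_dec (n + 1) i); auto; pose proof (t_le i n ltac:(lia)); lra|].
    destruct (le_lt_dec i (2 * n)); auto; pose proof (t_le (2 * n) (i - 1) ltac:(lia)); lra. }
  destruct (state_facts s Hd) as [[_ [_ [Hp _]]] Hpos]; rewrite (ell_on_stage i s Hi His) in Hpos.
  unfold window_number; rewrite (rsum_split _ (n + 1) i (2 * n + 1)), (rsum_split _ i (i + 1) (2 * n + 1)),
    rsum_one by lia.
  assert (0 <= rsum (fun j => 1 * x s j) (n + 1) i) by (apply moment_nonneg; auto; [lia|intros; lra]).
  assert (0 <= rsum (fun j => 1 * x s j) (i + 1) (2 * n + 1)) by (apply moment_nonneg; auto; [lia|intros; lra]).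
  lra.
Qed.

(* With h half the
   length and m the midpoint, balance_gain on [t_n, m] and window_loss on
   [m, t_2n] give W(m) (c^2 h^2 - 1) <= 2 c h / N for every large N. *)
Lemma window_length : t (2 * n)%nat - t n <= 2 / c.
Proof.
  set (h := (t (2 * n)%nat - t n) / 2); set (m := t n + h).
  assert (Hae : t n < t (2 * n)%nat) by (apply t_strict; lia).
  assert (Hh : 0 <= h) by (unfold h; lra).
  assert (Hch : 0 <= c * h) by (apply Rmult_le_pos; lra).
  assert (HWm : 0 < window_number m) by (apply window_number_pos; unfold m, h; lra).
  assert (Hest : forall N, (4 * n <= N)%nat ->
            window_number m * (c * c * h * h - 1) <= 2 * c * h / INR N).
  { intros N HN; assert (HNp : 0 < INR N) by (apply lt_0_INR; lia).
    assert (Hgain := balance_gain N (t n) m HN ltac:(unfold m, h; lra) ltac:(unfold m, h; lra)).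
    assert (Hloss := window_loss N m (t (2 * n)%nat) HN ltac:(unfold m, h; lra) ltac:(lra)).
    assert (Hlow := balance_lower N (t n) ltac:(lia) ltac:(apply window_in_domain; unfold m, h; lra)).
    assert (HWe : 0 <= window_number (t (2 * n)%nat)) by (apply moment_nonneg; [apply window_in_domain; unfold m, h; lra|lia|intros; lra]).
    replace (m - t n) with h in Hgain by (unfold m; ring).
    replace (t (2 * n)%nat - m) with h in Hloss by (unfold m, h; field).
    assert (c * h * (balance N (t n) + c * window_number m * h) <= c * h * balance N m)
      by (apply Rmult_le_compat_l; auto).
    assert (c * h * (- (2 / INR N)) <= c * h * balance N (t n)) by (apply Rmult_le_compat_l; auto).
    replace (2 * c * h / INR N) with (c * h * (2 / INR N)) by (field; lra).
    nra. }
  assert (Hsq : window_number m * (c * c * h * h - 1) <= 0)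
    by exact (nonpos_of_le_div_all _ (2 * c * h) (4 * n) Hest).
  assert (Hsq1 : c * c * h * h - 1 <= 0).
  { destruct (Rle_dec (c * c * h * h - 1) 0) as [|Hgt]; auto.
    assert (0 < window_number m * (c * c * h * h - 1)) by (apply Rmult_lt_0_compat; lra); lra. }
  assert (c * h <= 1) by nra.
  replace (t (2 * n)%nat - t n) with (2 * h) by (unfold h; field).
  apply Rmult_le_reg_l with c; auto; replace (c * (2 / c)) with 2 by (field; lra); nra.
Qed.

End Window.

Section Gelation.

Variables a0 al : R.
Hypothesis Ha0 : 0 < a0.
Hypothesis Hal : 0 < al.
Hypothesis HKlow : forall i j, (1 <= i)%nat -> (1 <= j)%nat ->
  a0 * Rpower (Rmin (ln (INR i + 1)) (ln (INR j + 1))) (1 + al) <= K i j.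

Definition dyadic_const : R := 2 / (a0 * Rpower (ln 2) (1 + al)).

(* Beyond size 2^k the kernel is at least a0 (k ln 2)^(1+al), so the k-th
   dyadic window has length at most dyadic_const * k^-(1+al). *)
Lemma dyadic_window_length k : (1 <= k)%nat ->
  t (2 ^ S k)%nat - t (2 ^ k)%nat <= dyadic_const * / Rpower (INR k) (1 + al).
Proof.
  intros Hk; set (n := (2 ^ k)%nat).
  assert (Hn : (1 <= n)%nat) by (unfold n; apply Nat.le_succ_l, Nat.neq_0_lt_0, Nat.pow_nonzero; lia).
  assert (Hln2 : 0 < ln 2) by (rewrite <- ln_1; apply ln_increasing; lra).
  assert (Hl : 0 < ln (INR n + 2)) by (rewrite <- ln_1; apply ln_increasing; pose proof (pos_INR n); lra).
  set (c := a0 * Rpower (ln (INR n + 2)) (1 + al)).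
  assert (Hc : 0 < c) by (apply Rmult_lt_0_compat; [auto|apply exp_pos]).
  assert (HKc : forall a b, (n + 1 <= a)%nat -> (n + 1 <= b)%nat -> c <= K a b).
  { intros a b Ha Hb; eapply Rle_trans; [|apply HKlow; lia].
    unfold c; apply Rmult_le_compat_l; [lra|apply Rle_Rpower_l; [lra|split; auto]].
    assert (INR (n + 1) <= INR a) by (apply le_INR; lia).
    assert (INR (n + 1) <= INR b) by (apply le_INR; lia).
    rewrite plus_INR in *; simpl (INR 1) in *.
    apply Rmin_glb; apply ln_le; pose proof (pos_INR n); lra. }
  replace (2 ^ S k)%nat with (2 * n)%nat by (unfold n; rewrite Nat.pow_succ_r'; auto).
  eapply Rle_trans; [apply (window_length n c Hn Hc HKc)|].
  assert (Hlk : INR k * ln 2 <= ln (INR n + 2)).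
  { rewrite <- ln_pow by lra; apply ln_le; [apply pow_lt; lra|].
    unfold n; rewrite pow_INR; change (INR 2) with 2; lra. }
  assert (Hk0 : 0 < INR k) by (apply lt_0_INR; lia).
  assert (Hp : Rpower (INR k) (1 + al) * Rpower (ln 2) (1 + al) <= Rpower (ln (INR n + 2)) (1 + al)).
  { rewrite Rpower_mult_distr by auto.
    apply Rle_Rpower_l; [lra|split; auto; apply Rmult_lt_0_compat; auto]. }
  assert (Hq1 : 0 < Rpower (INR k) (1 + al)) by apply exp_pos.
  assert (Hq2 : 0 < Rpower (ln 2) (1 + al)) by apply exp_pos.
  unfold dyadic_const.
  replace (2 / (a0 * Rpower (ln 2) (1 + al)) * / Rpower (INR k) (1 + al))
    with (2 / (a0 * (Rpower (INR k) (1 + al) * Rpower (ln 2) (1 + al)))) by (field; lra).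
  unfold Rdiv; apply Rmult_le_compat_l; [lra|].
  apply Rinv_le_contravar; [apply Rmult_lt_0_compat; auto; apply Rmult_lt_0_compat; auto|].
  unfold c; apply Rmult_le_compat_l; lra.
Qed.

(* Summing the windows against the telescoping bound for k^-(1+al). *)
Lemma dyadic_time_bound k : (1 <= k)%nat ->
  t (2 ^ S k)%nat <= t 2%nat + dyadic_const * (1 + / al * (1 - Rpower (INR k) (- al))).
Proof.
  assert (Hconst : 0 < dyadic_const)
    by (apply Rdiv_lt_0_compat; [lra|apply Rmult_lt_0_compat; [auto|apply exp_pos]]).
  induction k as [|k IH]; intros Hk; [lia|].
  destruct (Nat.eq_dec k 0) as [->|Hk0].
  - assert (W := dyadic_window_length 1 (le_n 1)); simpl in W |- *.
    assert (Hone : forall y, Rpower 1 y = 1) by (intros; unfold Rpower; rewrite ln_1, Rmult_0_r, exp_0; auto).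
    rewrite !Hone, Rinv_1 in *; lra.
  - assert (W := dyadic_window_length (S k) ltac:(lia)).
    assert (TB := rpower_telescope al k Hal ltac:(lia)).
    assert (dyadic_const * / Rpower (INR (S k)) (1 + al)
            <= dyadic_const * (/ al * (Rpower (INR k) (- al) - Rpower (INR (S k)) (- al))))
      by (apply Rmult_le_compat_l; lra).
    specialize (IH ltac:(lia)); lra.
Qed.

Lemma switching_times_converge : exists tinf, Un_cv t tinf.
Proof.
  assert (Hconst : 0 < dyadic_const)
    by (apply Rdiv_lt_0_compat; [lra|apply Rmult_lt_0_compat; [auto|apply exp_pos]]).
  assert (Hbound : forall k, t k <= t 2%nat + dyadic_const * (1 + / al)).
  { intros k; apply Rle_trans with (t (2 ^ S (S k))%nat).
    - apply t_le; assert (S k < 2 ^ S k)%nat by (apply Nat.pow_gt_lin_r; lia).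
      rewrite Nat.pow_succ_r'; lia.
    - eapply Rle_trans; [apply dyadic_time_bound; lia|].
      assert (0 <= dyadic_const * / al * Rpower (INR (S k)) (- al)).
      { apply Rmult_le_pos; [apply Rmult_le_pos; [lra|left; apply Rinv_0_lt_compat; auto]|].
        left; apply exp_pos. }
      nra. }
  destruct (growing_cv t) as [T HT]; [intros k; apply t_le; lia| |exists T; auto].
  exists (t 2%nat + dyadic_const * (1 + / al)); intros y [k ->]; auto.
Qed.

End Gelation.

End Solution.

Theorem theorem1p3
  (K : nat -> nat -> R) (kappa : R) (x0 : nat -> R)
  (ell : R -> nat) (t : nat -> R) (x : R -> nat -> R)
  (Hkappa : 0 < kappa)
  (HK : forall i j, (1 <= i)%nat -> (1 <= j)%nat ->
          0 <= K i j /\ K i j = K j i /\ K i j <= kappa * INR i * INR j)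
  (Hdelta : forall i, (1 <= i)%nat ->
          exists d, 0 < d /\ forall j, (i <= j)%nat -> d <= K i j)
  (Hx0 : in_X11_plus x0) (Hx01 : 0 < x0 1%nat) (Hnorm : norm11_is x0 1)
  (Hsol : is_min_driven_solution K x0 ell t x) :
  ((exists A0, 0 < A0 /\
      forall i j, (1 <= i)%nat -> (1 <= j)%nat ->
        K i j <= Rmin (ln (INR i + 1)) (ln (INR j + 1)) / (4 * A0)) ->
     cv_infty t)
  /\
  ((exists a0 alpha, 0 < a0 /\ 0 < alpha /\
      forall i j, (1 <= i)%nat -> (1 <= j)%nat ->
        a0 * Rpower (Rmin (ln (INR i + 1)) (ln (INR j + 1))) (1 + alpha) <= K i j) ->
     exists tinf, Un_cv t tinf).
Proof.
  assert (HKsym : forall i j, (1 <= i)%nat -> (1 <= j)%nat -> 0 <= K i j /\ K i j = K j i)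
    by (intros i j Hi Hj; destruct (HK i j Hi Hj) as [? [? _]]; auto).
  split.
  - intros [A0 [HA0 HKup]].
    exact (switching_times_unbounded K x0 ell t x HKsym Hnorm Hsol A0 HA0 HKup Hx01).
  - intros [a0 [al [Ha0 [Hal HKlow]]]].
    exact (switching_times_converge K x0 ell t x HKsym Hnorm Hsol a0 al Ha0 Hal HKlow).
Qed.
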